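(* Model $\mathbb{H}^2\times\mathbb{R}$ as $\{(x_1,x_2,x_3,x_4)\in\mathbb{L}^4:-x_1^2+x_2^2+x_3^2=-1,\ x_1>0\}$. Let $K>0$ be a constant and let $S$ be a complete immersed sphere of revolution about the vertical axis $\{(1,0,0)\}\times\mathbb{R}$ with constant extrinsic curvature $K$, parametrized by $\psi_K(u,v)=(\cosh k(u),\sinh k(u)\cos v,\sinh k(u)\sin v,h(u))$ with generating curve $\alpha(u)=(\cosh k(u),\sinh k(u),0,h(u))$, where $k\ge0$ and the parameter $u$ equals $dk/ds$ for $s$ the arc length of the profile curve (oriented so that $s=0$ is the lowest point). Then $S$ is embedded, and for $-1\le u\le1$, $$k(u)=\cosh^{-1}\exp\!\left(\frac{1-u^2}{2K}\right),\qquad h(u)=-\frac1K\int_1^u\frac{\sqrt{1-w^2}}{\sqrt{1-\exp\!\left(-\frac{1-w^2}{K}\right)}}\,dw+C$$ for some real constant $C$. Moreover, the slice $\mathbb{H}^2\times\{h_0\}$ with $h_0=\frac1K\int_{-1}^0\frac{\sqrt{1-w^2}}{\sqrt{1-\exp(-\frac{1-w^2}{K})}}\,dw+C$ divides $S$ into two symmetric (upper and lower) parts.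
   Context: $\mathbb{L}^4$ is $\mathbb{R}^4$ with the metric $-dx_1^2+dx_2^2+dx_3^2+dx_4^2$; the induced metric on the given submanifold is the product metric of $\mathbb{H}^2\times\mathbb{R}$. The extrinsic curvature of a surface is $K=\det(II)/\det(I)$. *)

From Stdlib Require Import Reals.
Open Scope R_scope.

Record R4 := mkR4 { c1 : R; c2 : R; c3 : R; c4 : R }.

Definition lor (p q : R4) : R :=
  - c1 p * c1 q + c2 p * c2 q + c3 p * c3 q + c4 p * c4 q.

Definition arccosh (x : R) : R := ln (x + sqrt (x ^ 2 - 1)).

Definition psi (k h : R -> R) (s v : R) : R4 :=
  mkR4 (cosh (k s)) (sinh (k s) * cos v) (sinh (k s) * sin v) (h s).

Definition dS (F G : R -> R -> R4) (s v : R) : Prop :=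
  derivable_pt_lim (fun t => c1 (F t v)) s (c1 (G s v)) /\
  derivable_pt_lim (fun t => c2 (F t v)) s (c2 (G s v)) /\
  derivable_pt_lim (fun t => c3 (F t v)) s (c3 (G s v)) /\
  derivable_pt_lim (fun t => c4 (F t v)) s (c4 (G s v)).

Definition dV (F G : R -> R -> R4) (s v : R) : Prop :=
  derivable_pt_lim (fun t => c1 (F s t)) v (c1 (G s v)) /\
  derivable_pt_lim (fun t => c2 (F s t)) v (c2 (G s v)) /\
  derivable_pt_lim (fun t => c3 (F s t)) v (c3 (G s v)) /\
  derivable_pt_lim (fun t => c4 (F s t)) v (c4 (G s v)).

(* N is a unit normal to the surface at p (with tangent vectors Fs, Fv) which is
   tangent to H^2 x R at p:  <N, (p1,p2,p3,0)> = 0. *)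
Definition unit_normal_HxR (p Fs Fv N : R4) : Prop :=
  - c1 N * c1 p + c2 N * c2 p + c3 N * c3 p = 0 /\
  lor N Fs = 0 /\ lor N Fv = 0 /\ lor N N = 1.

Definition ext_curvature_const (F : R -> R -> R4) (D : R -> R -> Prop) (K0 : R) : Prop :=
  exists Fs Fv Fss Fsv Fvv : R -> R -> R4,
    (forall s v, D s v ->
       dS F Fs s v /\ dV F Fv s v /\ dS Fs Fss s v /\ dS Fv Fsv s v /\ dV Fv Fvv s v) /\
    (forall s v N, D s v -> unit_normal_HxR (F s v) (Fs s v) (Fv s v) N ->
       let E := lor (Fs s v) (Fs s v) in
       let Fm := lor (Fs s v) (Fv s v) in
       let G := lor (Fv s v) (Fv s v) in
       let e := lor (Fss s v) N in
       let f := lor (Fsv s v) N in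
       let g := lor (Fvv s v) N in
       (e * g - f * f) / (E * G - Fm * Fm) = K0).

Definition reflect_slice (h0 : R) (p : R4) : R4 :=
  mkR4 (c1 p) (c2 p) (c3 p) (2 * h0 - c4 p).

Definition hint (K w : R) : R :=
  sqrt (1 - w ^ 2) / sqrt (1 - exp (- ((1 - w ^ 2) / K))).

(* Let u = k' be the slope of the unit-speed profile (k(s), h(s)).
   - For a rotational surface, the second fundamental form along the
     meridian v = 0 gives extrinsic curvature - u' / tanh k; constant
     curvature K is therefore the ODE  u' = - K tanh k  (rotational_profile_ode).
   - u^2 + 2K ln cosh k is then a first integral; its value 1 is read off at
     the pole s = 0 (energy).  This gives the formula for k, the strict
     decrease of u, and h' > 0, hence embeddedness (psi_embedded).
   - With G a primitive of the continuous even extension of the integrand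
     [hint], h + G(u)/K has zero derivative (h_formula), which is the
     formula for h.
   - G(u) + G(-u) = 2 G(0) makes the change u -> -u the reflection in the
     slice x4 = h0 (profile_reflection). *)

From Stdlib Require Import Reals ZArith Lra Lia Psatz.
From Stdlib Require Import RList RiemannInt_SF Ranalysis5.
Open Scope R_scope.

Lemma cosh_sq_sub_sinh_sq x : cosh x ^ 2 - sinh x ^ 2 = 1.
Proof.
  unfold cosh, sinh.
  assert (H : exp x * exp (- x) = 1).
  { rewrite <- exp_plus. replace (x + - x) with 0 by ring. apply exp_0. }
  set (a := exp x) in *; set (b := exp (- x)) in *.
  unfold Rdiv. nra.
Qed.

Lemma cosh_pos x : 0 < cosh x.
Proof. unfold cosh. generalize (exp_pos x) (exp_pos (- x)). lra. Qed.

Lemma sinh_pos x : 0 < x -> 0 < sinh x.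
Proof. intro H. rewrite <- sinh_0. apply sinh_lt. exact H. Qed.

Lemma ln_cosh_nonneg x : 0 <= ln (cosh x).
Proof.
  assert (H : 1 <= cosh x) by (generalize (cosh_sq_sub_sinh_sq x) (cosh_pos x); nra).
  destruct H as [H|H].
  - left. rewrite <- ln_1. apply ln_increasing; lra.
  - rewrite <- H, ln_1. lra.
Qed.

Lemma ln_cosh_pos x : 0 < x -> 0 < ln (cosh x).
Proof.
  intro Hx. rewrite <- ln_1. apply ln_increasing; [lra|].
  generalize (cosh_sq_sub_sinh_sq x) (cosh_pos x) (sinh_pos x Hx). nra.
Qed.

Lemma arccosh_cosh x : 0 <= x -> arccosh (cosh x) = x.
Proof.
  intro H. unfold arccosh.
  replace (cosh x ^ 2 - 1) with (sinh x ^ 2) by (generalize (cosh_sq_sub_sinh_sq x); lra).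
  rewrite sqrt_pow2.
  - replace (cosh x + sinh x) with (exp x) by (unfold cosh, sinh; field). apply ln_exp.
  - destruct H as [H|<-]; [left; apply sinh_pos; exact H | rewrite sinh_0; lra].
Qed.

Lemma cos_sin_eq_angle a b : cos a = cos b -> sin a = sin b ->
  exists n : Z, a = b + 2 * IZR n * PI.
Proof.
  intros Hc Hs.
  assert (H1 : cos (a - b) = 1).
  { rewrite cos_minus, Hc, Hs. generalize (sin2_cos2 b). unfold Rsqr. lra. }
  set (x := (a - b) / 2).
  assert (H2 : sin x = 0).
  { assert (E := cos_2a_sin x). replace (2 * x) with (a - b) in E by (unfold x; field).
    rewrite H1 in E. nra. }
  destruct (sin_eq_0_0 x H2) as [n Hn]. exists n. unfold x in Hn. lra.
Qed.

(* The library rules for derivatives are stated with [plus_fct], [comp], ...;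
   these restatements on lambda-terms apply directly by unification. *)
Lemma deriv_value f x l l' : derivable_pt_lim f x l -> l = l' -> derivable_pt_lim f x l'.
Proof. intros H <-. exact H. Qed.

Lemma deriv_const c x : derivable_pt_lim (fun _ => c) x 0.
Proof. exact (derivable_pt_lim_const c x). Qed.

Lemma deriv_id x : derivable_pt_lim (fun t => t) x 1.
Proof. exact (derivable_pt_lim_id x). Qed.

Lemma deriv_plus f g x a b : derivable_pt_lim f x a -> derivable_pt_lim g x b ->
  derivable_pt_lim (fun t => f t + g t) x (a + b).
Proof. intros H1 H2. exact (derivable_pt_lim_plus f g x a b H1 H2). Qed.

Lemma deriv_minus f g x a b : derivable_pt_lim f x a -> derivable_pt_lim g x b ->
  derivable_pt_lim (fun t => f t - g t) x (a - b).
Proof. intros H1 H2. exact (derivable_pt_lim_minus f g x a b H1 H2). Qed.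

Lemma deriv_opp f x a : derivable_pt_lim f x a -> derivable_pt_lim (fun t => - f t) x (- a).
Proof. intro H. exact (derivable_pt_lim_opp f x a H). Qed.

Lemma deriv_mult f g x a b : derivable_pt_lim f x a -> derivable_pt_lim g x b ->
  derivable_pt_lim (fun t => f t * g t) x (a * g x + f x * b).
Proof. intros H1 H2. exact (derivable_pt_lim_mult f g x a b H1 H2). Qed.

Lemma deriv_div f g x a b : derivable_pt_lim f x a -> derivable_pt_lim g x b -> g x <> 0 ->
  derivable_pt_lim (fun t => f t / g t) x ((a * g x - b * f x) / g x ^ 2).
Proof.
  intros H1 H2 H3. replace (g x ^ 2) with (Rsqr (g x)) by (unfold Rsqr; ring).
  exact (derivable_pt_lim_div f g x a b H1 H2 H3).
Qed.

Lemma deriv_comp f g x a b : derivable_pt_lim f x a -> derivable_pt_lim g (f x) b ->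
  derivable_pt_lim (fun t => g (f t)) x (b * a).
Proof. intros H1 H2. exact (derivable_pt_lim_comp f g x a b H1 H2). Qed.

Lemma deriv_square f x a : derivable_pt_lim f x a ->
  derivable_pt_lim (fun t => f t ^ 2) x (2 * f x * a).
Proof.
  intro H. eapply deriv_value.
  - apply (deriv_comp f (fun y => y ^ 2)); [exact H | apply derivable_pt_lim_pow].
  - simpl. ring.
Qed.

Lemma deriv_continuity f x a : derivable_pt_lim f x a -> continuity_pt f x.
Proof. intro H. apply derivable_continuous_pt. exists a. exact H. Qed.

Lemma cont_plus f g x : continuity_pt f x -> continuity_pt g x ->
  continuity_pt (fun t => f t + g t) x.
Proof. intros H1 H2. exact (continuity_pt_plus f g x H1 H2). Qed.

Lemma cont_minus f g x : continuity_pt f x -> continuity_pt g x ->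
  continuity_pt (fun t => f t - g t) x.
Proof. intros H1 H2. exact (continuity_pt_minus f g x H1 H2). Qed.

Lemma cont_mult f g x : continuity_pt f x -> continuity_pt g x ->
  continuity_pt (fun t => f t * g t) x.
Proof. intros H1 H2. exact (continuity_pt_mult f g x H1 H2). Qed.

Lemma cont_const c x : continuity_pt (fun _ => c) x.
Proof. exact (continuity_pt_const (fun _ => c) x (fun _ _ => eq_refl)). Qed.

Lemma cont_comp f g x : continuity_pt f x -> continuity_pt g (f x) ->
  continuity_pt (fun t => g (f t)) x.
Proof. intros H1 H2. exact (continuity_pt_comp f g x H1 H2). Qed.

(* continuity in epsilon-delta form, without the side condition x <> x0 *)
Lemma continuity_pt_eps f x0 : continuity_pt f x0 <->
  forall eps, 0 < eps -> exists d, 0 < d /\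
    forall x, Rabs (x - x0) < d -> Rabs (f x - f x0) < eps.
Proof.
  split.
  - intros Hc eps He. destruct (Hc eps He) as [d [Hd Hd']].
    exists d; split; [lra|]. intros x Hx.
    destruct (Req_dec x0 x) as [<-|Hne].
    + replace (f x0 - f x0) with 0 by ring. rewrite Rabs_R0; lra.
    + apply (Hd' x). split; [split; [exact I | exact Hne] | exact Hx].
  - intros H eps He. destruct (H eps He) as [d [Hd Hd']].
    exists d; split; [lra|]. intros x [_ Hx]. apply Hd'. exact Hx.
Qed.

Lemma null_derivative_const f a b : a <= b ->
  (forall x, a < x < b -> derivable_pt_lim f x 0) ->
  (forall x, a <= x <= b -> continuity_pt f x) ->
  forall x, a <= x <= b -> f x = f a.
Proof.
  intros _ Hd Hc x Hx.
  apply (null_derivative_loc f a b (fun y Hy => exist _ 0 (Hd y Hy)) Hc); auto.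
Qed.

Lemma null_derivative_open f a b : (forall x, a < x < b -> derivable_pt_lim f x 0) ->
  forall x y, a < x < b -> a < y < b -> f x = f y.
Proof.
  intros Hd.
  assert (Hle : forall x y, a < x < b -> a < y < b -> x <= y -> f y = f x).
  { intros x y Hx Hy Hxy. apply (null_derivative_const f x y Hxy); try lra.
    - intros z Hz. apply Hd. lra.
    - intros z Hz. apply (deriv_continuity f z 0), Hd. lra. }
  intros x y Hx Hy. destruct (Rle_dec x y).
  - symmetry. apply Hle; auto.
  - apply Hle; auto; lra.
Qed.

Lemma continuity_pt_ge_right f x m d : continuity_pt f x -> 0 < d ->
  (forall s, x < s < x + d -> m <= f s) -> m <= f x.
Proof.
  intros Hc Hdpos H.
  destruct (Rle_lt_dec m (f x)) as [|Hlt]; [assumption|exfalso].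
  destruct (proj1 (continuity_pt_eps f x) Hc (m - f x)) as [e [He He']]; [lra|].
  set (s := x + Rmin (e / 2) (d / 2)).
  assert (Hs1 : 0 < Rmin (e / 2) (d / 2)) by (apply Rmin_pos; lra).
  assert (Hs2 := Rmin_l (e / 2) (d / 2)). assert (Hs3 := Rmin_r (e / 2) (d / 2)).
  assert (Hm := H s ltac:(unfold s; lra)).
  assert (Hr : Rabs (s - x) < e) by (unfold s; rewrite Rabs_right; lra).
  assert (Hv := He' s Hr). apply Rabs_def2 in Hv. lra.
Qed.

Lemma derivative_le_right_quotients f x l m d : derivable_pt_lim f x l -> 0 < d ->
  (forall s, 0 < s < d -> (f (x + s) - f x) / s <= m) -> l <= m.
Proof.
  intros Hf Hdpos H.
  destruct (Rle_lt_dec l m) as [|Hlt]; [assumption|exfalso].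
  destruct (Hf (l - m)) as [e He]; [lra|].
  assert (Hepos := cond_pos e).
  set (s := Rmin (e / 2) (d / 2)).
  assert (Hs1 : 0 < s) by (apply Rmin_pos; lra).
  assert (Hs2 := Rmin_l (e / 2) (d / 2)). assert (Hs3 := Rmin_r (e / 2) (d / 2)).
  assert (Hq := He s ltac:(lra) ltac:(rewrite Rabs_right; unfold s in *; lra)).
  assert (Hm := H s ltac:(unfold s in *; lra)).
  apply Rabs_def2 in Hq. lra.
Qed.

Lemma nonvanishing_keeps_sign f a b : a <= b ->
  (forall x, a <= x <= b -> continuity_pt f x) ->
  (forall x, a <= x <= b -> f x <> 0) -> 0 < f a -> 0 < f b.
Proof.
  intros Hab Hc Hnz Ha.
  destruct (Rlt_le_dec 0 (f b)) as [|Hb]; [assumption|exfalso].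
  destruct Hab as [Hab|<-]; [|lra].
  destruct (IVT_interv (fun x => - f x) a b) as [z [Hz Hz']].
  - intros y Hy. apply continuity_pt_opp. apply Hc. exact Hy.
  - exact Hab.
  - lra.
  - destruct Hb as [Hb|Hb]; [lra | exfalso; apply (Hnz b); lra].
  - apply (Hnz z Hz). lra.
Qed.

Lemma Riemann_integrable_interior_ext f g a b : Riemann_integrable f a b ->
  (forall x, Rmin a b < x < Rmax a b -> f x = g x) -> Riemann_integrable g a b.
Proof.
  intros pr Heq eps.
  destruct (pr eps) as [phi [psi [H1 H2]]].
  destruct phi as [phif [l [lf Had]]].
  assert (Had' : adapted_couple (fun t => phif t + (g t - f t)) a b l lf).
  { destruct Had as [Ho [Hl0 [Hln [Hlen Hc]]]].
    repeat split; auto.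
    intros i Hi x Hx. unfold open_interval in Hx.
    rewrite (Hc i Hi x Hx).
    assert (A1 : pos_Rl l 0 <= pos_Rl l i).
    { apply RList_P5; auto. apply RList_P3. exists i; split; auto. lia. }
    assert (A2 : pos_Rl l (S i) <= pos_Rl l (pred (length l))).
    { apply RList_P7; auto. apply RList_P3. exists (S i); split; auto. lia. }
    rewrite (Heq x); [ring|]. rewrite <- Hl0, <- Hln. lra. }
  exists (mkStepFun (existT _ l (existT _ lf Had'))). exists psi. split; auto.
  intros t Ht. simpl. replace (g t - (phif t + (g t - f t))) with (f t - phif t) by ring.
  apply H1. exact Ht.
Qed.

(* the clamping map onto [a,b], used to read one-sided continuity at the
   endpoints of the profile as two-sided continuity *)
Definition clamp a b t := Rmax a (Rmin b t).

Lemma clamp_id a b t : a <= t <= b -> clamp a b t = t.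
Proof. intro Ht. unfold clamp, Rmax, Rmin. repeat destruct Rle_dec; lra. Qed.

Lemma clamp_range a b t : a <= b -> a <= clamp a b t <= b.
Proof. intro Hab. unfold clamp, Rmax, Rmin. repeat destruct Rle_dec; lra. Qed.

Lemma clamp_continuous a b x : a <= b -> continuity_pt (clamp a b) x.
Proof.
  intro Hab. apply continuity_pt_eps. intros eps He. exists eps. split; [exact He|].
  intros y Hy. apply Rle_lt_trans with (Rabs (y - x)); [|exact Hy].
  unfold clamp, Rmax, Rmin. repeat destruct Rle_dec; unfold Rabs;
    repeat destruct Rcase_abs; lra.
Qed.

Definition expq x := if Req_EM_T x 0 then 1 else (1 - exp (- x)) / x.

Lemma expq_pos x : 0 < expq x.
Proof.
  unfold expq. destruct (Req_EM_T x 0) as [_|H]; [lra|].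
  destruct (Rtotal_order x 0) as [Hx|[Hx|Hx]]; [|contradiction|].
  - assert (1 < exp (- x)) by (rewrite <- exp_0; apply exp_increasing; lra).
    apply Rdiv_neg_neg; lra.
  - assert (exp (- x) < 1) by (rewrite <- exp_0; apply exp_increasing; lra).
    apply Rdiv_lt_0_compat; lra.
Qed.

Lemma deriv_one_minus_exp x : derivable_pt_lim (fun y => 1 - exp (- y)) x (exp (- x)).
Proof.
  eapply deriv_value.
  - apply deriv_minus; [apply deriv_const|].
    apply (deriv_comp (fun y => - y) exp); [apply deriv_opp, deriv_id | apply derivable_pt_lim_exp].
  - ring.
Qed.

(* at 0, continuity of expq is the derivative of 1 - e^(-x) at 0 *)
Lemma expq_continuous x : continuity_pt expq x.
Proof.
  destruct (Req_EM_T x 0) as [->|Hx].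
  - apply continuity_pt_eps. intros eps He.
    destruct (deriv_one_minus_exp 0 eps He) as [d Hd].
    exists d. split; [apply cond_pos|]. intros y Hy.
    unfold expq at 2. destruct (Req_EM_T 0 0) as [_|]; [|lra].
    unfold expq. destruct (Req_EM_T y 0) as [->|Hy0].
    + replace (1 - 1) with 0 by ring. rewrite Rabs_R0. lra.
    + rewrite Rminus_0_r in Hy. specialize (Hd y Hy0 Hy).
      rewrite Rplus_0_l, Ropp_0, exp_0 in Hd.
      replace ((1 - exp (- y) - (1 - 1)) / y - 1) with ((1 - exp (- y)) / y - 1) in Hd
        by (field; exact Hy0).
      exact Hd.
  - apply continuity_pt_locally_ext with (f := fun y => (1 - exp (- y)) / y) (a := Rabs x).
    + apply Rabs_pos_lt. exact Hx.
    + intros y Hy. unfold expq. destruct (Req_EM_T y 0) as [->|]; [|reflexivity].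
      exfalso. unfold Rdist in Hy. rewrite Rabs_minus_sym, Rminus_0_r in Hy. lra.
    + eapply deriv_continuity. apply deriv_div; [apply deriv_one_minus_exp | apply deriv_id | exact Hx].
Qed.

(* the continuous, even function agreeing with hint K on (-1,1) *)
Definition hint_ext K w := sqrt (K / expq ((1 - w ^ 2) / K)).

Lemma hint_ext_continuous K w : 0 < K -> continuity_pt (hint_ext K) w.
Proof.
  intro HK. unfold hint_ext.
  apply (cont_comp (fun w => K / expq ((1 - w ^ 2) / K)) sqrt).
  - apply (cont_comp (fun w => expq ((1 - w ^ 2) / K)) (fun y => K / y)).
    + apply (cont_comp (fun w => (1 - w ^ 2) / K) expq); [|apply expq_continuous].
      eapply deriv_continuity. apply deriv_div; [|apply deriv_const|lra].
      apply deriv_minus; [apply deriv_const | apply deriv_square, deriv_id].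
    + eapply deriv_continuity. apply deriv_div; [apply deriv_const | apply deriv_id |].
      generalize (expq_pos ((1 - w ^ 2) / K)). lra.
  - apply continuity_pt_sqrt. apply Rlt_le, Rdiv_lt_0_compat; [exact HK | apply expq_pos].
Qed.

Lemma hint_ext_hint K w : 0 < K -> -1 < w < 1 -> hint_ext K w = hint K w.
Proof.
  intros HK Hw. unfold hint_ext, hint, expq.
  set (t := 1 - w ^ 2). assert (Ht : 0 < t / K) by (apply Rdiv_lt_0_compat; unfold t; nra).
  destruct (Req_EM_T (t / K) 0) as [E|_]; [lra|].
  assert (Hy : 0 < 1 - exp (- (t / K))).
  { assert (exp (- (t / K)) < 1) by (rewrite <- exp_0; apply exp_increasing; lra). lra. }
  assert (Htp : 0 < t) by (unfold t; nra).
  rewrite <- sqrt_div by lra.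
  f_equal. field. split; lra.
Qed.

Lemma hint_ext_even K w : hint_ext K (- w) = hint_ext K w.
Proof. unfold hint_ext. replace ((- w) ^ 2) with (w ^ 2) by ring. reflexivity. Qed.

Lemma m1_le_1 : -1 <= 1.
Proof. lra. Qed.

Definition hint_prim K (HK : 0 < K) : R -> R :=
  primitive m1_le_1 (FTC_P1 m1_le_1 (fun x _ => hint_ext_continuous K x HK)).

Lemma hint_prim_deriv K HK w : -1 <= w <= 1 ->
  derivable_pt_lim (hint_prim K HK) w (hint_ext K w).
Proof. intro Hw. apply RiemannInt_P28. exact Hw. Qed.

Lemma hint_prim_RiemannInt K HK u (pr : Riemann_integrable (hint_ext K) (-1) u) :
  -1 <= u <= 1 -> hint_prim K HK u = RiemannInt pr.
Proof.
  intro Hu. unfold hint_prim, primitive.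
  destruct (Rle_dec (-1) u) as [r|]; [|lra]. destruct (Rle_dec u 1) as [r0|]; [|lra].
  apply RiemannInt_P5.
Qed.

Lemma hint_ext_integral K HK a b (pr : Riemann_integrable (hint_ext K) a b) :
  -1 <= a <= 1 -> -1 <= b <= 1 -> RiemannInt pr = hint_prim K HK b - hint_prim K HK a.
Proof.
  intros Ha Hb.
  set (C := fun x (_ : -1 <= x <= 1) => hint_ext_continuous K x HK).
  set (pra := FTC_P1 m1_le_1 C (proj1 Ha) (proj2 Ha)).
  set (prb := FTC_P1 m1_le_1 C (proj1 Hb) (proj2 Hb)).
  rewrite (hint_prim_RiemannInt K HK a pra Ha), (hint_prim_RiemannInt K HK b prb Hb).
  rewrite <- (RiemannInt_P26 pra pr prb). ring.
Qed.

Lemma hint_ext_integrable K a b : 0 < K -> Riemann_integrable (hint_ext K) a b.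
Proof.
  intro HK. destruct (Rle_dec a b) as [H|H].
  - apply continuity_implies_RiemannInt; [exact H|]. intros; apply hint_ext_continuous; exact HK.
  - apply RiemannInt_P1. apply continuity_implies_RiemannInt; [lra|].
    intros; apply hint_ext_continuous; exact HK.
Qed.

Lemma hint_integrable K a b : 0 < K -> -1 <= a <= 1 -> -1 <= b <= 1 ->
  Riemann_integrable (hint K) a b.
Proof.
  intros HK Ha Hb. apply Riemann_integrable_interior_ext with (hint_ext K).
  - apply hint_ext_integrable. exact HK.
  - intros x Hx. apply hint_ext_hint; [exact HK|]. split.
    + apply Rle_lt_trans with (Rmin a b); [apply Rmin_glb; lra | lra].
    + apply Rlt_le_trans with (Rmax a b); [lra | apply Rmax_lub; lra].
Qed.

Lemma hint_integral K HK a b (pr : Riemann_integrable (hint K) a b) :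
  -1 <= a <= 1 -> -1 <= b <= 1 -> RiemannInt pr = hint_prim K HK b - hint_prim K HK a.
Proof.
  assert (Hle : forall a b (pr : Riemann_integrable (hint K) a b),
            -1 <= a <= 1 -> -1 <= b <= 1 -> a <= b ->
            RiemannInt pr = hint_prim K HK b - hint_prim K HK a).
  { intros a' b' pr' Ha Hb Hab.
    rewrite (RiemannInt_P18 pr' (hint_ext_integrable K a' b' HK) Hab).
    - apply hint_ext_integral; assumption.
    - intros x Hx. symmetry. apply hint_ext_hint; [exact HK | lra]. }
  intros Ha Hb. destruct (Rle_dec a b) as [H|H].
  - apply Hle; assumption.
  - rewrite (RiemannInt_P8 pr (RiemannInt_P1 pr)), (Hle b a); [ring | assumption..| lra].
Qed.

(* since the integrand is even, the primitive is odd about its value at 0 *)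
Lemma hint_prim_odd K HK u : -1 <= u <= 1 ->
  hint_prim K HK u + hint_prim K HK (- u) = 2 * hint_prim K HK 0.
Proof.
  intro Hu.
  set (F := fun u => hint_prim K HK u + hint_prim K HK (- u)).
  assert (HF : forall x, -1 <= x <= 1 -> derivable_pt_lim F x 0).
  { intros x Hx. eapply deriv_value.
    - apply deriv_plus; [apply hint_prim_deriv; exact Hx|].
      apply (deriv_comp (fun u => - u)); [apply deriv_opp, deriv_id | apply hint_prim_deriv; lra].
    - rewrite hint_ext_even. ring. }
  assert (Hconst := null_derivative_const F (-1) 1 m1_le_1
                      (fun x Hx => HF x ltac:(lra))
                      (fun x Hx => deriv_continuity F x 0 (HF x Hx))).
  change (F u = 2 * hint_prim K HK 0).
  rewrite (Hconst u Hu), <- (Hconst 0 ltac:(lra)). unfold F. rewrite Ropp_0. ring.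
Qed.

Definition deriv4 (c : R -> R4) (t : R) (w : R4) : Prop :=
  derivable_pt_lim (fun x => c1 (c x)) t (c1 w) /\
  derivable_pt_lim (fun x => c2 (c x)) t (c2 w) /\
  derivable_pt_lim (fun x => c3 (c x)) t (c3 w) /\
  derivable_pt_lim (fun x => c4 (c x)) t (c4 w).

Lemma deriv4_unique c t w w' : deriv4 c t w -> deriv4 c t w' -> w = w'.
Proof.
  intros (H1 & H2 & H3 & H4) (G1 & G2 & G3 & G4).
  destruct w, w'; simpl in *. f_equal; eapply uniqueness_limite; eassumption.
Qed.

Lemma deriv4_local c c' a b t w : a < t < b -> (forall z, a < z < b -> c z = c' z) ->
  deriv4 c t w -> deriv4 c' t w.
Proof.
  intros Ht E (H1 & H2 & H3 & H4).
  repeat split.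
  - exact (derivable_pt_lim_locally_ext _ _ t a b _ Ht (fun z Hz => f_equal c1 (E z Hz)) H1).
  - exact (derivable_pt_lim_locally_ext _ _ t a b _ Ht (fun z Hz => f_equal c2 (E z Hz)) H2).
  - exact (derivable_pt_lim_locally_ext _ _ t a b _ Ht (fun z Hz => f_equal c3 (E z Hz)) H3).
  - exact (derivable_pt_lim_locally_ext _ _ t a b _ Ht (fun z Hz => f_equal c4 (E z Hz)) H4).
Qed.

Definition profile_velocity (k dk dh : R -> R) (t : R) : R4 :=
  mkR4 (sinh (k t) * dk t) (cosh (k t) * dk t) 0 (dh t).

Definition rotation_field (k : R -> R) (t v : R) : R4 :=
  mkR4 0 (- (sinh (k t) * sin v)) (sinh (k t) * cos v) 0.

Lemma rotation_field_0 k t : rotation_field k t 0 = mkR4 0 0 (sinh (k t)) 0.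
Proof. unfold rotation_field. rewrite sin_0, cos_0. f_equal; ring. Qed.

Lemma deriv_sinh_comp k t a : derivable_pt_lim k t a ->
  derivable_pt_lim (fun x => sinh (k x)) t (cosh (k t) * a).
Proof.
  intro H. eapply deriv_value; [apply (deriv_comp k sinh); [exact H | apply derivable_pt_lim_sinh]|ring].
Qed.

Lemma deriv_cosh_comp k t a : derivable_pt_lim k t a ->
  derivable_pt_lim (fun x => cosh (k x)) t (sinh (k t) * a).
Proof.
  intro H. eapply deriv_value; [apply (deriv_comp k cosh); [exact H | apply derivable_pt_lim_cosh]|ring].
Qed.

Lemma deriv4_meridian k h dk dh t :
  derivable_pt_lim k t (dk t) -> derivable_pt_lim h t (dh t) ->
  deriv4 (fun x => psi k h x 0) t (profile_velocity k dk dh t).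
Proof.
  intros Hk Hh. unfold deriv4, psi, profile_velocity; simpl. rewrite cos_0, sin_0.
  repeat split.
  - apply deriv_cosh_comp. exact Hk.
  - eapply deriv_value; [apply (deriv_mult (fun x => sinh (k x)) (fun _ => 1));
      [apply deriv_sinh_comp; exact Hk | apply deriv_const] | ring].
  - eapply deriv_value; [apply (deriv_mult (fun x => sinh (k x)) (fun _ => 0));
      [apply deriv_sinh_comp; exact Hk | apply deriv_const] | ring].
  - exact Hh.
Qed.

Lemma deriv4_parallel k h t v : deriv4 (fun x => psi k h t x) v (rotation_field k t v).
Proof.
  unfold deriv4, psi, rotation_field; simpl. repeat split.
  - apply deriv_const.
  - eapply deriv_value; [apply (deriv_mult (fun _ => sinh (k t)) cos);
      [apply deriv_const | apply derivable_pt_lim_cos] | ring].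
  - eapply deriv_value; [apply (deriv_mult (fun _ => sinh (k t)) sin);
      [apply deriv_const | apply derivable_pt_lim_sin] | ring].
  - apply deriv_const.
Qed.

Lemma deriv4_rotation_field_t k dk t : derivable_pt_lim k t (dk t) ->
  deriv4 (fun x => rotation_field k x 0) t (mkR4 0 0 (cosh (k t) * dk t) 0).
Proof.
  intro Hk. unfold deriv4, rotation_field; simpl. rewrite sin_0, cos_0. repeat split.
  - apply deriv_const.
  - eapply deriv_value; [apply deriv_opp, (deriv_mult (fun x => sinh (k x)) (fun _ => 0));
      [apply deriv_sinh_comp; exact Hk | apply deriv_const] | ring].
  - eapply deriv_value; [apply (deriv_mult (fun x => sinh (k x)) (fun _ => 1));
      [apply deriv_sinh_comp; exact Hk | apply deriv_const] | ring].
  - apply deriv_const.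
Qed.

Lemma deriv4_rotation_field_v k t :
  deriv4 (fun v => rotation_field k t v) 0 (mkR4 0 (- sinh (k t)) 0 0).
Proof.
  unfold deriv4, rotation_field; simpl. repeat split.
  - apply deriv_const.
  - eapply deriv_value; [apply deriv_opp, (deriv_mult (fun _ => sinh (k t)) sin);
      [apply deriv_const | apply derivable_pt_lim_sin] | rewrite cos_0; ring].
  - eapply deriv_value; [apply (deriv_mult (fun _ => sinh (k t)) cos);
      [apply deriv_const | apply derivable_pt_lim_cos] | rewrite sin_0; ring].
  - apply deriv_const.
Qed.

Lemma deriv4_profile_velocity k dk dh t a' b' :
  derivable_pt_lim k t (dk t) -> derivable_pt_lim dk t a' -> derivable_pt_lim dh t b' ->
  deriv4 (profile_velocity k dk dh) t
    (mkR4 (cosh (k t) * dk t * dk t + sinh (k t) * a')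
          (sinh (k t) * dk t * dk t + cosh (k t) * a') 0 b').
Proof.
  intros Hk Ha Hb. unfold deriv4, profile_velocity; simpl. repeat split.
  - eapply deriv_value; [apply (deriv_mult (fun x => sinh (k x)) dk);
      [apply deriv_sinh_comp; exact Hk | exact Ha] | ring].
  - eapply deriv_value; [apply (deriv_mult (fun x => cosh (k x)) dk);
      [apply deriv_cosh_comp; exact Hk | exact Ha] | ring].
  - apply deriv_const.
  - exact Hb.
Qed.

(* Away from the axis, differentiability of the profile velocity forces that
   of k' (read off from sinh(k) k') and of h'. *)
Lemma profile_velocity_deriv_components a b k dk dh t w : a < t < b ->
  (forall z, a < z < b -> 0 < k z) -> derivable_pt_lim k t (dk t) ->
  deriv4 (profile_velocity k dk dh) t w ->
  derivable_pt_lim dk t ((c1 w - cosh (k t) * dk t * dk t) / sinh (k t)) /\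
  derivable_pt_lim dh t (c4 w).
Proof.
  intros Ht Hpos Hk (H1 & _ & _ & H4). split; [|exact H4].
  assert (HS : sinh (k t) <> 0) by (apply Rgt_not_eq, sinh_pos, Hpos, Ht).
  apply derivable_pt_lim_locally_ext with (fun x => sinh (k x) * dk x / sinh (k x)) a b;
    [exact Ht | intros z Hz; field; apply Rgt_not_eq, sinh_pos, Hpos, Hz |].
  eapply deriv_value; [apply (deriv_div _ _ _ _ _ H1 (deriv_sinh_comp k t _ Hk) HS)|].
  simpl. field. exact HS.
Qed.

Definition meridian_normal (S C a b : R) : R4 := mkR4 (b * S) (b * C) 0 (- a).

Lemma meridian_normal_unit k h dk dh t : cosh (k t) ^ 2 - sinh (k t) ^ 2 = 1 ->
  dk t ^ 2 + dh t ^ 2 = 1 ->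
  unit_normal_HxR (psi k h t 0) (profile_velocity k dk dh t) (mkR4 0 0 (sinh (k t)) 0)
    (meridian_normal (sinh (k t)) (cosh (k t)) (dk t) (dh t)).
Proof.
  intros HCS Hab. unfold unit_normal_HxR, lor, meridian_normal, psi, profile_velocity; simpl.
  rewrite cos_0, sin_0.
  repeat split; [ring | | ring |].
  - transitivity (dk t * dh t * (cosh (k t) ^ 2 - sinh (k t) ^ 2 - 1)); [ring | rewrite HCS; ring].
  - transitivity (dh t ^ 2 * (cosh (k t) ^ 2 - sinh (k t) ^ 2) + dk t ^ 2); [ring | rewrite HCS; lra].
Qed.

(* The extrinsic curvature of a rotational surface along the meridian: for a
   unit-speed profile with slope a = k', it equals - k'' / tanh k. *)
Lemma rotational_curvature_formula S C a b a' b' :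
  C ^ 2 - S ^ 2 = 1 -> a ^ 2 + b ^ 2 = 1 -> a * a' + b * b' = 0 -> S <> 0 ->
  let Xs := mkR4 (S * a) (C * a) 0 b in
  let Xv := mkR4 0 0 S 0 in
  let N := meridian_normal S C a b in
  (lor (mkR4 (C * a * a + S * a') (S * a * a + C * a') 0 b') N * lor (mkR4 0 (- S) 0 0) N
     - lor (mkR4 0 0 (C * a) 0) N * lor (mkR4 0 0 (C * a) 0) N)
  / (lor Xs Xs * lor Xv Xv - lor Xs Xv * lor Xs Xv) = - a' * C / S.
Proof.
  intros HCS Hab Horth HS. unfold lor, meridian_normal; simpl.
  assert (Hnum : (- (C * a * a + S * a') * (b * S) + (S * a * a + C * a') * (b * C) + 0 * 0
                  + b' * - a) * (- 0 * (b * S) + - S * (b * C) + 0 * 0 + 0 * - a)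
                 - (- 0 * (b * S) + 0 * (b * C) + C * a * 0 + 0 * - a)
                   * (- 0 * (b * S) + 0 * (b * C) + C * a * 0 + 0 * - a)
                 = - a' * C * S).
  { transitivity (- (a' * b * (C ^ 2 - S ^ 2) - a * b') * b * S * C); [ring|].
    rewrite HCS. transitivity (- (a' * (a ^ 2 + b ^ 2) - a * (a * a' + b * b')) * S * C); [ring|].
    rewrite Hab, Horth. ring. }
  assert (Hden : (- (S * a) * (S * a) + C * a * (C * a) + 0 * 0 + b * b)
                 * (- 0 * 0 + 0 * 0 + S * S + 0 * 0)
                 - (- (S * a) * 0 + C * a * 0 + 0 * S + b * 0)
                   * (- (S * a) * 0 + C * a * 0 + 0 * S + b * 0) = S ^ 2).
  { transitivity (S ^ 2 * ((C ^ 2 - S ^ 2) * a ^ 2 + b ^ 2)); [ring|]. rewrite HCS. nra. }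
  rewrite Hnum, Hden. field. exact HS.
Qed.

Section RotationalSurface.
Variables (K a b : R) (k h dk dh : R -> R).
Hypotheses
  (Hdk : forall s, a < s < b -> derivable_pt_lim k s (dk s))
  (Hdh : forall s, a < s < b -> derivable_pt_lim h s (dh s))
  (Harc : forall s, a < s < b -> dk s ^ 2 + dh s ^ 2 = 1)
  (Hkpos : forall s, a < s < b -> 0 < k s)
  (Hcurv : ext_curvature_const (psi k h) (fun s _ => a < s < b) K).

Lemma unit_speed_orthogonal s a' b' : a < s < b ->
  derivable_pt_lim dk s a' -> derivable_pt_lim dh s b' -> dk s * a' + dh s * b' = 0.
Proof.
  intros Hs Da Db.
  assert (D1 : derivable_pt_lim (fun t => dk t ^ 2 + dh t ^ 2) s (2 * dk s * a' + 2 * dh s * b'))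
    by (apply deriv_plus; apply deriv_square; assumption).
  assert (D0 : derivable_pt_lim (fun t => dk t ^ 2 + dh t ^ 2) s 0).
  { apply derivable_pt_lim_locally_ext with (fun _ => 1) a b; [exact Hs | | apply deriv_const].
    intros z Hz. symmetry. apply Harc, Hz. }
  generalize (uniqueness_limite _ _ _ _ D1 D0). lra.
Qed.

(* Along the meridian v = 0 the derivatives of psi are identified with the
   explicit ones; the curvature formula then expresses K through k''. *)
Lemma curvature_along_meridian s : a < s < b ->
  exists a' b', derivable_pt_lim dk s a' /\ derivable_pt_lim dh s b' /\
    - a' * cosh (k s) / sinh (k s) = K.
Proof.
  intro Hs.
  destruct Hcurv as (Fs & Fv & Fss & Fsv & Fvv & Hder & Hval).
  assert (EFs : forall t, a < t < b -> Fs t 0 = profile_velocity k dk dh t).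
  { intros t Ht. apply (deriv4_unique (fun x => psi k h x 0) t).
    - apply (Hder t 0 Ht).
    - apply deriv4_meridian; [apply Hdk | apply Hdh]; exact Ht. }
  assert (EFv : forall t v, a < t < b -> Fv t v = rotation_field k t v).
  { intros t v Ht. apply (deriv4_unique (fun x => psi k h t x) v).
    - apply (Hder t v Ht).
    - apply deriv4_parallel. }
  destruct (Hder s 0 Hs) as (_ & _ & HFss & HFsv & HFvv).
  assert (Hacc : deriv4 (profile_velocity k dk dh) s (Fss s 0))
    by exact (deriv4_local (fun t => Fs t 0) _ a b s _ Hs EFs HFss).
  destruct (profile_velocity_deriv_components a b k dk dh s _ Hs Hkpos (Hdk s Hs) Hacc)
    as [Da Db].
  set (a' := (c1 (Fss s 0) - cosh (k s) * dk s * dk s) / sinh (k s)) in Da.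
  set (b' := c4 (Fss s 0)) in Db.
  exists a', b'. split; [exact Da | split; [exact Db|]].
  assert (EFss := deriv4_unique _ _ _ _ Hacc
                    (deriv4_profile_velocity k dk dh s a' b' (Hdk s Hs) Da Db)).
  assert (EFsv : Fsv s 0 = mkR4 0 0 (cosh (k s) * dk s) 0).
  { apply (deriv4_unique (fun x => rotation_field k x 0) s); [|apply deriv4_rotation_field_t, Hdk, Hs].
    apply (deriv4_local (fun t => Fv t 0) _ a b s _ Hs (fun z Hz => EFv z 0 Hz) HFsv). }
  assert (EFvv : Fvv s 0 = mkR4 0 (- sinh (k s)) 0 0).
  { apply (deriv4_unique (fun v => rotation_field k s v) 0); [|apply deriv4_rotation_field_v].
    apply (deriv4_local (fun v => Fv s v) _ (-1) 1 0 _ ltac:(lra) (fun v _ => EFv s v Hs) HFvv). }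
  assert (HCS := cosh_sq_sub_sinh_sq (k s)).
  assert (HS : sinh (k s) <> 0) by (apply Rgt_not_eq, sinh_pos, Hkpos, Hs).
  assert (HN := meridian_normal_unit k h dk dh s HCS (Harc s Hs)).
  rewrite <- rotation_field_0, <- (EFv s 0 Hs), <- (EFs s Hs) in HN.
  assert (HK := Hval s 0 _ Hs HN). cbv zeta in HK.
  rewrite (EFs s Hs), (EFv s 0 Hs), rotation_field_0, EFss, EFsv, EFvv in HK.
  unfold profile_velocity in HK.
  rewrite <- (rotational_curvature_formula _ _ _ _ a' b' HCS (Harc s Hs)
                (unit_speed_orthogonal s a' b' Hs Da Db) HS).
  exact HK.
Qed.

Lemma rotational_profile_ode s : a < s < b ->
  derivable_pt_lim dk s (- K * (sinh (k s) / cosh (k s))) /\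
  exists b', derivable_pt_lim dh s b'.
Proof.
  intro Hs. destruct (curvature_along_meridian s Hs) as (a' & b' & Da & Db & HK).
  split; [|exists b'; exact Db].
  eapply deriv_value; [exact Da|].
  assert (HS : 0 < sinh (k s)) by (apply sinh_pos, Hkpos, Hs).
  assert (HC := cosh_pos (k s)). rewrite <- HK. field. split; lra.
Qed.

End RotationalSurface.

Section Sphere.
Variables (K L : R) (k h dk dh : R -> R).
Hypotheses (HK : 0 < K) (HL : 0 < L)
  (Hdk : forall s, 0 <= s <= L -> derivable_pt_lim k s (dk s))
  (Hdh : forall s, 0 <= s <= L -> derivable_pt_lim h s (dh s))
  (Harc : forall s, 0 <= s <= L -> dk s ^ 2 + dh s ^ 2 = 1)
  (Hk0 : k 0 = 0) (HkL : k L = 0)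
  (Hkpos : forall s, 0 < s < L -> 0 < k s)
  (Hdk0 : dk 0 = 1) (HdkL : dk L = -1)
  (Hlow : forall s, 0 <= s <= L -> h 0 <= h s)
  (Hcurv : ext_curvature_const (psi k h) (fun s _ => 0 < s < L) K).

Lemma profile_ode s : 0 < s < L ->
  derivable_pt_lim dk s (- K * (sinh (k s) / cosh (k s))) /\
  exists b', derivable_pt_lim dh s b'.
Proof.
  apply (rotational_profile_ode K 0 L k h dk dh); try assumption;
    intros t Ht; [apply Hdk | apply Hdh | apply Harc]; lra.
Qed.

(* the potential term of the first integral  k'^2 + 2K ln cosh k *)
Definition potential t := 2 * K * ln (cosh (k t)).

Lemma potential_deriv t : 0 <= t <= L ->
  derivable_pt_lim potential t (2 * K * (sinh (k t) / cosh (k t) * dk t)).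
Proof.
  intro Ht. assert (HC := cosh_pos (k t)). unfold potential. eapply deriv_value.
  - apply (deriv_mult (fun _ => 2 * K) (fun t => ln (cosh (k t)))); [apply deriv_const|].
    apply (deriv_comp (fun t => cosh (k t)) ln);
      [apply deriv_cosh_comp, Hdk, Ht | apply derivable_pt_lim_ln, HC].
  - field. lra.
Qed.

Lemma potential_continuous t : 0 <= t <= L -> continuity_pt potential t.
Proof. intro Ht. eapply deriv_continuity. apply potential_deriv, Ht. Qed.

Lemma potential_0 : potential 0 = 0.
Proof. unfold potential. rewrite Hk0, cosh_0, ln_1. ring. Qed.

Lemma potential_L : potential L = 0.
Proof. unfold potential. rewrite HkL, cosh_0, ln_1. ring. Qed.

Lemma potential_nonneg t : 0 <= potential t.
Proof. unfold potential. generalize (ln_cosh_nonneg (k t)). nra. Qed.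

Lemma potential_pos t : 0 < t < L -> 0 < potential t.
Proof. intro Ht. unfold potential. generalize (ln_cosh_pos (k t) (Hkpos t Ht)). nra. Qed.

(* First integral of the ODE.  Its value is pinned down at the pole s = 0:
   it is at most 1 since k'^2 <= 1 and the potential vanishes there, and at
   least 1 because k'(0) = 1 is a limit of difference quotients of k. *)
Lemma energy s : 0 <= s <= L -> dk s ^ 2 + potential s = 1.
Proof.
  set (Phi := fun t => dk t ^ 2 + potential t).
  assert (Hconst : forall x y, 0 < x < L -> 0 < y < L -> Phi x = Phi y).
  { apply null_derivative_open. intros x Hx. eapply deriv_value.
    - apply deriv_plus; [apply deriv_square, (proj1 (profile_ode x Hx)) | apply potential_deriv; lra].
    - assert (HC := cosh_pos (k x)). field. lra. }
  set (c := Phi (L / 2)).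
  assert (Hc : forall x, 0 < x < L -> Phi x = c) by (intros; apply Hconst; lra).
  assert (Hle : c <= 1).
  { assert (H : c - 1 <= potential 0).
    { apply continuity_pt_ge_right with L; [apply potential_continuous; lra | exact HL|].
      intros s' Hs'. rewrite <- (Hc s') by lra. unfold Phi.
      generalize (Harc s' ltac:(lra)) (pow2_ge_0 (dh s')). lra. }
    rewrite potential_0 in H. lra. }
  assert (Hge : 1 <= c).
  { assert (H : dk 0 <= (1 + c) / 2).
    { apply derivative_le_right_quotients with k 0 L; [apply Hdk; lra | exact HL|].
      intros s' Hs'. rewrite Rplus_0_l, Hk0.
      destruct (MVT_cor2 k dk 0 s') as [xi [Hxi Hxi']]; [lra | intros; apply Hdk; lra|].
      rewrite Hk0 in Hxi. replace ((k s' - 0) / s') with (dk xi) by (rewrite Hxi; field; lra).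
      assert (Hsq : dk xi ^ 2 <= c).
      { rewrite <- (Hc xi) by lra. unfold Phi. generalize (potential_nonneg xi). lra. }
      nra. }
    rewrite Hdk0 in H. lra. }
  intro Hs.
  destruct (Req_dec s 0) as [->|H0]; [rewrite Hdk0, potential_0; ring|].
  destruct (Req_dec s L) as [->|H1]; [rewrite HdkL, potential_L; ring|].
  change (Phi s = 1). rewrite Hc; lra.
Qed.

Lemma dk_sq_lt_1 s : 0 < s < L -> dk s ^ 2 < 1.
Proof. intro Hs. generalize (energy s ltac:(lra)) (potential_pos s Hs). lra. Qed.

Lemma dk_range s : 0 <= s <= L -> -1 <= dk s <= 1.
Proof. intro Hs. generalize (energy s Hs) (potential_nonneg s). nra. Qed.

Lemma k_nonneg s : 0 <= s <= L -> 0 <= k s.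
Proof.
  intro Hs. destruct (Req_dec s 0) as [->|H0]; [rewrite Hk0; lra|].
  destruct (Req_dec s L) as [->|H1]; [rewrite HkL; lra|]. left. apply Hkpos. lra.
Qed.

(* the energy identity solved for k *)
Lemma k_formula s : 0 <= s <= L -> k s = arccosh (exp ((1 - dk s ^ 2) / (2 * K))).
Proof.
  intro Hs. assert (E := energy s Hs). unfold potential in E.
  replace ((1 - dk s ^ 2) / (2 * K)) with (ln (cosh (k s))) by (rewrite <- E; field; lra).
  rewrite exp_ln by apply cosh_pos. symmetry. apply arccosh_cosh, k_nonneg, Hs.
Qed.

(* u = k' is strictly decreasing: k'' = - K tanh k < 0 inside, and the
   endpoint values +-1 are extremal since k'^2 < 1 inside *)
Lemma dk_decreasing s1 s2 : 0 <= s1 -> s1 < s2 -> s2 <= L -> dk s2 < dk s1.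
Proof.
  intros H1 H12 H2.
  destruct (Req_dec s1 0) as [->|N1].
  - rewrite Hdk0. destruct (Req_dec s2 L) as [->|N2]; [rewrite HdkL; lra|].
    generalize (dk_sq_lt_1 s2 ltac:(lra)). nra.
  - destruct (Req_dec s2 L) as [->|N2].
    + rewrite HdkL. generalize (dk_sq_lt_1 s1 ltac:(lra)). nra.
    + destruct (MVT_cor2 dk (fun t => - K * (sinh (k t) / cosh (k t))) s1 s2 H12)
        as [c [Hc Hc']]; [intros c Hc; apply profile_ode; lra|].
      assert (0 < K * (sinh (k c) / cosh (k c)) * (s2 - s1)).
      { apply Rmult_lt_0_compat; [apply Rmult_lt_0_compat; [exact HK|] | lra].
        apply Rdiv_lt_0_compat; [apply sinh_pos, Hkpos; lra | apply cosh_pos]. }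
      lra.
Qed.

(* h' does not vanish inside and h is lowest at s = 0, so h' > 0 *)
Lemma dh_pos s : 0 < s < L -> 0 < dh s.
Proof.
  assert (Hnz : forall t, 0 < t < L -> dh t <> 0).
  { intros t Ht E. generalize (Harc t ltac:(lra)) (dk_sq_lt_1 t Ht). rewrite E. lra. }
  assert (Hcont : forall t, 0 < t < L -> continuity_pt dh t).
  { intros t Ht. destruct (profile_ode t Ht) as [_ [b' Hb']]. eapply deriv_continuity. exact Hb'. }
  intro Hs. destruct (Rlt_le_dec 0 (dh s)) as [|Hle]; [assumption|exfalso].
  assert (Hneg : forall t, 0 < t <= s -> dh t < 0).
  { intros t Ht. destruct (Rlt_le_dec (dh t) 0) as [|Hle']; [assumption|exfalso].
    assert (Hpos : 0 < dh t) by (destruct Hle' as [|E]; [assumption | exfalso; apply (Hnz t); lra]).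
    assert (Hs' := nonvanishing_keeps_sign dh t s ltac:(lra)
                     (fun x Hx => Hcont x ltac:(lra)) (fun x Hx => Hnz x ltac:(lra)) Hpos).
    lra. }
  destruct (MVT_cor2 h dh 0 s) as [xi [Hxi Hxi']]; [lra | intros; apply Hdh; lra|].
  assert (dh xi < 0) by (apply Hneg; lra).
  generalize (Hlow s ltac:(lra)). nra.
Qed.

Lemma h_increasing s1 s2 : 0 <= s1 -> s1 < s2 -> s2 <= L -> h s1 < h s2.
Proof.
  intros H1 H12 H2.
  destruct (MVT_cor2 h dh s1 s2) as [xi [Hxi Hxi']]; [lra | intros; apply Hdh; lra|].
  assert (0 < dh xi) by (apply dh_pos; lra). nra.
Qed.

(* Near the poles the sign of k' is known (k' is close to +-1), so there
   k' = +- sqrt (1 - potential); this gives one-sided continuity of k'. *)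
Lemma dk_sqrt_near_0 : exists d, 0 < d /\
  forall s, 0 <= s < d -> dk s = sqrt (1 - potential s).
Proof.
  set (m := dk (L / 2)). assert (Hm : m ^ 2 < 1) by (apply dk_sq_lt_1; lra).
  destruct (proj1 (continuity_pt_eps potential 0) (potential_continuous 0 ltac:(lra))
              (1 - m ^ 2) ltac:(lra)) as [d [Hd Hd']].
  exists (Rmin d (L / 2)). split; [apply Rmin_pos; lra|].
  intros s Hs. assert (Hs1 := Rmin_l d (L / 2)). assert (Hs2 := Rmin_r d (L / 2)).
  assert (E := energy s ltac:(lra)).
  assert (Hnn : 0 <= dk s).
  { destruct (Req_dec s 0) as [->|H0]; [rewrite Hdk0; lra|].
    assert (Hp := Hd' s ltac:(rewrite Rminus_0_r, Rabs_right; lra)).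
    rewrite potential_0, Rminus_0_r, Rabs_right in Hp by apply Rle_ge, potential_nonneg.
    assert (Hdec : m < dk s) by (apply dk_decreasing; lra).
    nra. }
  replace (1 - potential s) with (dk s ^ 2) by lra.
  rewrite sqrt_pow2 by exact Hnn. reflexivity.
Qed.

Lemma dk_sqrt_near_L : exists d, 0 < d /\
  forall s, L - d < s <= L -> dk s = - sqrt (1 - potential s).
Proof.
  set (m := dk (L / 2)). assert (Hm : m ^ 2 < 1) by (apply dk_sq_lt_1; lra).
  destruct (proj1 (continuity_pt_eps potential L) (potential_continuous L ltac:(lra))
              (1 - m ^ 2) ltac:(lra)) as [d [Hd Hd']].
  exists (Rmin d (L / 2)). split; [apply Rmin_pos; lra|].
  intros s Hs. assert (Hs1 := Rmin_l d (L / 2)). assert (Hs2 := Rmin_r d (L / 2)).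
  assert (E := energy s ltac:(lra)).
  assert (Hnp : 0 <= - dk s).
  { destruct (Req_dec s L) as [->|H0]; [rewrite HdkL; lra|].
    assert (Hp := Hd' s ltac:(rewrite Rabs_left; lra)).
    rewrite potential_L, Rminus_0_r, Rabs_right in Hp by apply Rle_ge, potential_nonneg.
    assert (Hdec : dk s < m) by (apply dk_decreasing; lra).
    nra. }
  replace (1 - potential s) with ((- dk s) ^ 2) by lra.
  rewrite sqrt_pow2 by exact Hnp. ring.
Qed.

Lemma dk_clamp_continuous x : 0 <= x <= L -> continuity_pt (fun t => dk (clamp 0 L t)) x.
Proof.
  intro Hx.
  assert (Hpc : forall y, continuity_pt (fun t => potential (clamp 0 L t)) y).
  { intro y. apply (cont_comp (clamp 0 L) potential); [apply clamp_continuous; lra|].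
    apply potential_continuous, clamp_range; lra. }
  assert (Hsq : continuity_pt (fun t => sqrt (1 - potential (clamp 0 L t))) x).
  { apply (cont_comp (fun t => 1 - potential (clamp 0 L t)) sqrt);
      [apply cont_minus; [apply cont_const | apply Hpc]|].
    apply continuity_pt_sqrt. generalize (energy _ (clamp_range 0 L x ltac:(lra))) (pow2_ge_0 (dk (clamp 0 L x))).
    lra. }
  assert (Hcl := fun t => clamp_range 0 L t ltac:(lra)).
  destruct (Req_dec x 0) as [->|H0]; [|destruct (Req_dec x L) as [->|H1]].
  - destruct dk_sqrt_near_0 as [d [Hd Hsqrt]].
    apply continuity_pt_locally_ext with (fun t => sqrt (1 - potential (clamp 0 L t))) d;
      [exact Hd | | exact Hsq].
    intros y Hy. unfold Rdist in Hy. rewrite Rminus_0_r in Hy. symmetry. apply Hsqrt.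
    split; [apply Hcl|]. apply Rabs_def2 in Hy.
    unfold clamp, Rmax, Rmin. repeat destruct Rle_dec; lra.
  - destruct dk_sqrt_near_L as [d [Hd Hsqrt]].
    apply continuity_pt_locally_ext with (fun t => - sqrt (1 - potential (clamp 0 L t))) d;
      [exact Hd | | apply continuity_pt_opp, Hsq].
    intros y Hy. unfold Rdist in Hy. symmetry. apply Hsqrt.
    split; [|apply Hcl]. apply Rabs_def2 in Hy.
    unfold clamp, Rmax, Rmin. repeat destruct Rle_dec; lra.
  - apply continuity_pt_locally_ext with dk (Rmin x (L - x)); [apply Rmin_pos; lra | |].
    + intros y Hy. unfold Rdist in Hy. apply Rabs_def2 in Hy.
      generalize (Rmin_l x (L - x)) (Rmin_r x (L - x)). intros.
      rewrite clamp_id; [reflexivity | lra].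
    + destruct (profile_ode x ltac:(lra)) as [Da _]. eapply deriv_continuity. exact Da.
Qed.

Lemma dh_from_dk s : 0 < s < L -> hint_ext K (dk s) * (sinh (k s) / cosh (k s)) = dh s.
Proof.
  intro Hs.
  rewrite hint_ext_hint by (try exact HK; generalize (dk_sq_lt_1 s Hs); nra). unfold hint.
  set (S := sinh (k s)). set (C := cosh (k s)).
  assert (HS : 0 < S) by (apply sinh_pos, Hkpos, Hs).
  assert (HC : 0 < C) by apply cosh_pos.
  assert (HCS : C ^ 2 - S ^ 2 = 1) by apply cosh_sq_sub_sinh_sq.
  assert (Hb := dh_pos s Hs).
  assert (E1 : 1 - dk s ^ 2 = dh s ^ 2) by (generalize (Harc s ltac:(lra)); lra).
  assert (E0 : dh s ^ 2 = 2 * K * ln C)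
    by (generalize (energy s ltac:(lra)); unfold potential; fold C; lra).
  rewrite E1, sqrt_pow2 by lra.
  assert (E2 : exp (- (dh s ^ 2 / K)) = / (C * C)).
  { replace (- (dh s ^ 2 / K)) with (- (ln C + ln C)) by (rewrite E0; field; lra).
    rewrite exp_Ropp, exp_plus, exp_ln by lra. reflexivity. }
  rewrite E2.
  replace (1 - / (C * C)) with ((S / C) ^ 2)
    by (replace (1 - / (C * C)) with ((C ^ 2 - 1) / (C * C)) by (field; lra);
        replace (C ^ 2 - 1) with (S ^ 2) by lra; field; lra).
  rewrite sqrt_pow2 by (apply Rlt_le, Rdiv_lt_0_compat; lra).
  field. lra.
Qed.

(* h + G(k')/K is constant: its derivative is h' + g(k') k''/K = h' - g(k') tanh k = 0 *)
Lemma h_formula s : 0 <= s <= L ->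
  h s = h 0 + / K * (hint_prim K HK 1 - hint_prim K HK (dk s)).
Proof.
  intro Hs.
  set (F := fun t => h (clamp 0 L t) + / K * hint_prim K HK (dk (clamp 0 L t))).
  assert (HF' : forall x, 0 < x < L -> derivable_pt_lim F x 0).
  { intros x Hx.
    apply derivable_pt_lim_locally_ext with (fun t => h t + / K * hint_prim K HK (dk t)) 0 L;
      [exact Hx | intros z Hz; unfold F; rewrite clamp_id by lra; reflexivity |].
    eapply deriv_value.
    - apply deriv_plus; [apply Hdh; lra|].
      apply (deriv_mult (fun _ => / K)); [apply deriv_const|].
      apply (deriv_comp dk); [apply (proj1 (profile_ode x Hx)) | apply hint_prim_deriv, dk_range; lra].
    - rewrite <- (dh_from_dk x Hx). assert (cosh (k x) <> 0) by apply Rgt_not_eq, cosh_pos.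
      field. split; lra. }
  assert (HFc : forall x, 0 <= x <= L -> continuity_pt F x).
  { intros x Hx. unfold F. apply cont_plus.
    - apply (cont_comp (clamp 0 L) h); [apply clamp_continuous; lra|].
      eapply deriv_continuity. apply Hdh, clamp_range. lra.
    - apply cont_mult; [apply cont_const|].
      apply (cont_comp (fun t => dk (clamp 0 L t)) (hint_prim K HK));
        [apply dk_clamp_continuous, Hx|].
      eapply deriv_continuity. apply hint_prim_deriv, dk_range, clamp_range. lra. }
  assert (E := null_derivative_const F 0 L ltac:(lra) HF' HFc s Hs).
  unfold F in E. rewrite !clamp_id, Hdk0 in E by lra. lra.
Qed.

Lemma dk_surjective u : -1 <= u <= 1 -> exists s, 0 <= s <= L /\ dk s = - u.
Proof.
  intro Hu.
  destruct (Req_dec u 1) as [->|H1]; [exists L; split; [lra | exact HdkL]|].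
  destruct (Req_dec u (-1)) as [->|H2]; [exists 0; split; [lra | rewrite Hdk0; ring]|].
  destruct (IVT_interv (fun t => - dk (clamp 0 L t) - u) 0 L) as [z [Hz Hz']].
  - intros x Hx. apply cont_minus; [apply continuity_pt_opp, dk_clamp_continuous, Hx | apply cont_const].
  - exact HL.
  - rewrite clamp_id, Hdk0 by lra. lra.
  - rewrite clamp_id, HdkL by lra. lra.
  - exists z. split; [exact Hz|]. rewrite clamp_id in Hz' by lra. lra.
Qed.

(* reversing the slope, u -> -u, reflects the profile in the slice
   x4 = h0, h0 = h 0 + (G 0 - G (-1))/K *)
Lemma profile_reflection s v : 0 <= s <= L ->
  exists s', 0 <= s' <= L /\
    psi k h s' v = reflect_slice (h 0 + / K * (hint_prim K HK 0 - hint_prim K HK (-1))) (psi k h s v).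
Proof.
  intro Hs. destruct (dk_surjective (dk s) (dk_range s Hs)) as [s' [Hs' E]].
  exists s'. split; [exact Hs'|].
  assert (Ek : k s' = k s).
  { rewrite (k_formula s' Hs'), (k_formula s Hs), E. do 4 f_equal. ring. }
  unfold psi, reflect_slice; simpl. rewrite Ek. f_equal.
  rewrite (h_formula s' Hs'), (h_formula s Hs), E.
  assert (O1 := hint_prim_odd K HK (dk s) (dk_range s Hs)).
  assert (O2 := hint_prim_odd K HK 1 ltac:(lra)).
  replace (-1) with (- (1)) by ring.
  replace (hint_prim K HK (- dk s)) with (2 * hint_prim K HK 0 - hint_prim K HK (dk s)) by lra.
  replace (hint_prim K HK (- (1))) with (2 * hint_prim K HK 0 - hint_prim K HK 1) by lra.
  ring.
Qed.

(* the profile is a graph over the axis (h increasing) and meets the axis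
   only at the poles, so psi is injective up to the rotation period *)
Lemma psi_embedded s1 s2 v1 v2 : 0 <= s1 <= L -> 0 <= s2 <= L ->
  psi k h s1 v1 = psi k h s2 v2 ->
  s1 = s2 /\ (s1 = 0 \/ s1 = L \/ exists n : Z, v1 = v2 + 2 * IZR n * PI).
Proof.
  intros H1 H2 E. unfold psi in E. injection E as E1 E2 E3 E4.
  assert (Es : s1 = s2).
  { destruct (Rtotal_order s1 s2) as [Hlt|[Heq|Hgt]]; [| exact Heq |].
    - generalize (h_increasing s1 s2 ltac:(lra) Hlt ltac:(lra)). lra.
    - generalize (h_increasing s2 s1 ltac:(lra) Hgt ltac:(lra)). lra. }
  split; [exact Es|]. subst s2.
  destruct (Req_dec s1 0) as [->|N0]; [left; reflexivity|].
  destruct (Req_dec s1 L) as [->|NL]; [right; left; reflexivity|].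
  right; right. assert (HS : 0 < sinh (k s1)) by (apply sinh_pos, Hkpos; lra).
  apply cos_sin_eq_angle; apply Rmult_eq_reg_l with (sinh (k s1)); lra.
Qed.

End Sphere.

Theorem proposition5p1
  (K L : R) (k h dk dh : R -> R)
  (HK : 0 < K) (HL : 0 < L)
  (* profile curve (k(s), h(s)), s in [0,L], is C^1 and parametrized by arc length *)
  (Hdk : forall s, 0 <= s <= L -> derivable_pt_lim k s (dk s))
  (Hdh : forall s, 0 <= s <= L -> derivable_pt_lim h s (dh s))
  (Harc : forall s, 0 <= s <= L -> dk s ^ 2 + dh s ^ 2 = 1)
  (* sphere of revolution: the profile meets the axis exactly at its endpoints,
     orthogonally (smoothness at the poles) *)
  (Hk0 : k 0 = 0) (HkL : k L = 0)
  (Hkpos : forall s, 0 < s < L -> 0 < k s)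
  (Hdk0 : dk 0 = 1) (HdkL : dk L = -1)
  (* s = 0 is the lowest point *)
  (Hlow : forall s, 0 <= s <= L -> h 0 <= h s)
  (* constant extrinsic curvature K *)
  (Hcurv : ext_curvature_const (psi k h) (fun s _ => 0 < s < L) K) :
  (* S is embedded *)
  (forall s1 s2 v1 v2, 0 <= s1 <= L -> 0 <= s2 <= L ->
     psi k h s1 v1 = psi k h s2 v2 ->
     s1 = s2 /\ (s1 = 0 \/ s1 = L \/ exists n : Z, v1 = v2 + 2 * IZR n * PI)) /\
  (* u = dk/ds is a (decreasing) parameter of the profile, ranging over [-1,1] *)
  (forall s1 s2, 0 <= s1 -> s1 < s2 -> s2 <= L -> dk s2 < dk s1) /\
  (exists C : R,
     (forall s, 0 <= s <= L ->
        k s = arccosh (exp ((1 - dk s ^ 2) / (2 * K))) /\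
        exists pr : Riemann_integrable (hint K) 1 (dk s),
          h s = - (1 / K) * RiemannInt pr + C) /\
     exists pr0 : Riemann_integrable (hint K) (-1) 0,
       let h0 := (1 / K) * RiemannInt pr0 + C in
       forall s v, 0 <= s <= L ->
         exists s', 0 <= s' <= L /\ psi k h s' v = reflect_slice h0 (psi k h s v)).
Proof.
  split; [|split].
  - intros. apply (psi_embedded K L k h dk dh); assumption.
  - intros. apply (dk_decreasing K L k h dk dh); assumption.
  - exists (h 0). split.
    + intros s Hs.
      assert (Hu : -1 <= dk s <= 1) by (apply (dk_range K L k h dk dh); assumption).
      split; [apply (k_formula K L k h dk dh); assumption|].
      exists (hint_integrable K 1 (dk s) HK ltac:(lra) Hu).
      rewrite (hint_integral K HK) by lra.
      rewrite (h_formula K L k h dk dh HK); try assumption. field. lra.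
    + exists (hint_integrable K (-1) 0 HK ltac:(lra) ltac:(lra)).
      intros h0 s v Hs. unfold h0. rewrite (hint_integral K HK) by lra.
      replace (1 / K * (hint_prim K HK 0 - hint_prim K HK (-1)) + h 0)
        with (h 0 + / K * (hint_prim K HK 0 - hint_prim K HK (-1))) by (field; lra).
      apply (profile_reflection K L k h dk dh); assumption.
Qed.
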